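(* Let $S$ be a numerical semigroup with conductor $c$, and let $M=\{m=m_1<\cdots<m_r\}\subseteq S$ with $m\ge 2c-1$. Then $M$ is $(S,m,r)$-amenable if and only if for all $i\in\{1,\ldots,r\}$ and every minimal generator $g$ of $S$, if $m_i-g\ge m$ then $m_i-g\in M$.
   Context: A numerical semigroup is a submonoid of $\mathbb N$ with finite complement; its minimal generators are its irreducible nonzero elements (those not a sum of two nonzero elements of $S$); its conductor $c$ is the least element of $S$ such that $c+n\in S$ for all $n\in\mathbb N$. For $x\in S$, $\mathrm D(x)=\{\alpha\in S\mid x-\alpha\in S\}$. A set $M=\{m_1<\cdots<m_r\}\subseteq S$ with $2c-1\le m=m_1$ is $(S,m,r)$-amenable if $\mathrm D(m_i)\cap[m,\infty)\subseteq M$ for all $i\in\{1,\ldots,r\}$. *)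

From mathcomp Require Import all_boot.
Set Implicit Arguments. Unset Strict Implicit. Unset Printing Implicit Defensive.

Definition numerical_semigroup (S : pred nat) : Prop :=
  [/\ 0 \in S,
      (forall a b, a \in S -> b \in S -> a + b \in S)
    & exists N, forall n, N <= n -> n \in S].

Definition is_conductor (S : pred nat) (c : nat) : Prop :=
  [/\ c \in S, (forall n, c + n \in S)
    & forall c', c' \in S -> (forall n, c' + n \in S) -> c <= c'].

Definition minimal_generator (S : pred nat) (g : nat) : Prop :=
  [/\ g \in S, g != 0
    & ~ exists a b, [/\ a \in S, b \in S, a != 0, b != 0 & g = a + b]].

(* D(x) = { alpha in S | x - alpha in S } (genuine subtraction, so alpha <= x). *)
Definition D (S : pred nat) (x : nat) : pred nat :=
  fun alpha => [&& alpha \in S, alpha <= x & (x - alpha) \in S].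

(* M = m :: ms = {m_1 < ... < m_r} (r = size M) is (S, m, r)-amenable. *)
Definition amenable (S : pred nat) (M : seq nat) (m : nat) : Prop :=
  forall x, x \in M -> forall alpha, alpha \in D S x -> m <= alpha -> alpha \in M.

(* For [alpha] in [D(x)] with [alpha >= m], peel minimal generators off [x - alpha]
   one at a time: if [x - alpha = g + d] then [x - g >= alpha >= m], so the
   generator condition puts [x - g] in [M], and [alpha] lies in [D(x - g)].
   Conversely, when [m >= c] every [x - g >= m] lies in [S], so [x - g] is in
   [D(x)]; this is the only place the bound on [m] is used. *)

From mathcomp Require Import all_boot.
From Stdlib Require Import Classical.
From mathcomp Require Import zify.

Set Implicit Arguments.
Unset Strict Implicit.
Unset Printing Implicit Defensive.

Definition generator_closed (S : pred nat) (M : seq nat) (m : nat) : Prop :=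
  forall x, x \in M -> forall g, minimal_generator S g -> m + g <= x -> x - g \in M.

Lemma mem_D (S : pred nat) (x alpha : nat) :
  (alpha \in D S x) = [&& alpha \in S, alpha <= x & x - alpha \in S].
Proof. by []. Qed.

Lemma conductor_le_mem (S : pred nat) (c n : nat) :
  is_conductor S c -> c <= n -> n \in S.
Proof. by case=> _ Sc _ cn; rewrite -(subnKC cn); apply: Sc. Qed.

Section Submonoid.

Variable S : pred nat.
Hypothesis S0 : 0 \in S.
Hypothesis Sadd : forall a b, a \in S -> b \in S -> a + b \in S.

Lemma minimal_generator_decomposition (d : nat) :
  d \in S -> 0 < d -> exists g d', [/\ minimal_generator S g, d' \in S & d = g + d'].
Proof.
elim: d {-2}d (leqnn d) => [|n IH] d le_dn dS d_gt0; first by lia.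
case: (classic (exists a b, [/\ a \in S, b \in S, a != 0, b != 0 & d = a + b])).
  move=> [a [b [aS bS]]]; rewrite -!lt0n => a_gt0 b_gt0 dE.
  have le_an : a <= n by lia.
  rewrite dE; have [g [a' [gen_g a'S ->]]] := IH a le_an aS a_gt0.
  by exists g, (a' + b); rewrite addnA; split => //; apply: Sadd.
by move=> irr_d; exists d, 0; rewrite addn0; split=> //; split=> //; rewrite -lt0n.
Qed.

Lemma generator_closed_amenable (M : seq nat) (m : nat) :
  generator_closed S M m -> amenable S M m.
Proof.
move=> closedM x xM alpha; rewrite mem_D => /and3P[_ le_alpha_x].
move: {2}(x - alpha) (leqnn (x - alpha)) => k.
elim: k x xM le_alpha_x => [|k IH] x xM le_alpha_x le_diff_k diffS le_m_alpha.
  by have -> : alpha = x by lia.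
have [diff0 | diff_gt0] := posnP (x - alpha); first by have -> : alpha = x by lia.
have [g [d [gen_g dS diffE]]] := minimal_generator_decomposition diffS diff_gt0.
have g_gt0 : 0 < g by case: gen_g => _; rewrite lt0n.
have xgM : x - g \in M by apply: closedM => //; lia.
apply: (IH (x - g)) => //; [lia | lia | by have -> : x - g - alpha = d by lia].
Qed.

End Submonoid.

Lemma amenable_generator_closed (S : pred nat) (c : nat) (M : seq nat) (m : nat) :
  is_conductor S c -> c <= m -> amenable S M m -> generator_closed S M m.
Proof.
move=> condS le_cm amM x xM g [gS _ _] le_mg_x.
apply: (amM x xM) => //; last by lia.
rewrite mem_D leq_subr (conductor_le_mem condS) /=; last by lia.
by have -> : x - (x - g) = g by lia.
Qed.

Theorem proposition3p9 (S : pred nat) (c : nat) (m : nat) (ms : seq nat) :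
  numerical_semigroup S ->
  is_conductor S c ->
  sorted ltn (m :: ms) ->
  {subset (m :: ms) <= S} ->
  2 * c - 1 <= m ->
  (amenable S (m :: ms) m <->
   (forall x, x \in m :: ms -> forall g, minimal_generator S g ->
      m + g <= x -> x - g \in m :: ms)).
Proof.
move=> [S0 Sadd _] condS _ _ le_m; split.
  by apply: (amenable_generator_closed condS); lia.
exact: generator_closed_amenable.
Qed.
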